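(* Let $n\in\mathbb{N}$ and $\hbar\in{]0,\infty[}$. The map $\Theta_\hbar:\mathscr{P}(\mathbb{C}^{1+n})\to\mathscr{P}(\mathbb{C}^{1+n})$, $$\Theta_\hbar(f)=\Big(\exp\Big(-\hbar\sum_{j=0}^n\frac{\partial^2}{\partial z_j\partial\overline{z_j}}\Big)f\Big)\circ\overline{\,\cdot\,},$$ where $\overline{\,\cdot\,}:\mathbb{C}^{1+n}\to\mathbb{C}^{1+n}$ is componentwise complex conjugation, is a linear bijection satisfying $\Theta_\hbar(f\star_\hbar g)=\Theta_\hbar(f)\star_{-\hbar}\Theta_\hbar(g)$ and $\Theta_\hbar(\overline{f})=\overline{\Theta_\hbar(f)}$ for all $f,g\in\mathscr{P}(\mathbb{C}^{1+n})$; i.e. it is a $^*$-isomorphism from $(\mathscr{P}(\mathbb{C}^{1+n}),\star_\hbar)$ to $(\mathscr{P}(\mathbb{C}^{1+n}),\star_{-\hbar})$.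
   Context: $\mathscr{P}(\mathbb{C}^{1+n})$ is the space of complex polynomials in $z_0,\dots,z_n,\overline{z_0},\dots,\overline{z_n}$. For $\hbar\in\mathbb{R}$, the Wick product is $f\star_\hbar g=\sum_{K\in\mathbb{N}_0^{1+n}}\frac{\hbar^{|K|}}{K!}\frac{\partial^{|K|}f}{\partial\overline{z}^K}\frac{\partial^{|K|}g}{\partial z^K}$, with involution pointwise complex conjugation. *)

From HB Require Import structures.
From mathcomp Require Import all_boot all_order all_algebra.
From mathcomp Require Import mpoly.
From mathcomp Require Import complex.

Set Implicit Arguments.
Unset Strict Implicit.
Unset Printing Implicit Defensive.

Import Order.TTheory GRing.Theory Num.Theory.
Local Open Scope ring_scope.
Local Open Scope complex_scope.

(* The complex numbers are modelled as R[i] = complex R for an arbitrary real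
   closed field R (R[i] is the usual C when R is the field of real numbers).
   P(C^{1+n}) is modelled as the polynomial algebra in the 2(n+1) variables
   z_0..z_n (indices lshift j) and zbar_0..zbar_n (indices rshift j). *)

Section Wick.
Variables (R : rcfType) (n : nat).

Definition Cpoly := {mpoly R[i][n.+1 + n.+1]}.

Definition zi (j : 'I_n.+1) : 'I_(n.+1 + n.+1) := lshift n.+1 j.
Definition zbi (j : 'I_n.+1) : 'I_(n.+1 + n.+1) := rshift n.+1 j.

Definition dZ (K : 'X_{1..n.+1}) (f : Cpoly) : Cpoly :=
  foldr (fun j => iter (K j) (mderiv (zi j))) f (enum 'I_n.+1).
Definition dZb (K : 'X_{1..n.+1}) (f : Cpoly) : Cpoly :=
  foldr (fun j => iter (K j) (mderiv (zbi j))) f (enum 'I_n.+1).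

Definition mfact (K : 'X_{1..n.+1}) : nat := \prod_(j < n.+1) (K j)`!.

(* Only K with |K| < msize f can contribute (higher derivatives of f vanish),
   so the sum is taken over the finite type of such multi-indices. *)
Definition wick (h : R) (f g : Cpoly) : Cpoly :=
  \sum_(K : 'X_{1..n.+1 < (msize f).+1})
     ((h ^+ mdeg K / (mfact K)%:R)%:C) *: (dZb K f * dZ K g).

(* pointwise complex conjugation: conjugate the coefficients and exchange
   z_j <-> zbar_j *)
Definition swapvar (i : 'I_(n.+1 + n.+1)) : Cpoly :=
  match split i with inl j => 'X_(zbi j) | inr j => 'X_(zi j) end.

(* f o conj, conj : C^{1+n} -> C^{1+n} componentwise conjugation:
   exchanges z_j and zbar_j without conjugating coefficients *)
Definition comp_conj (f : Cpoly) : Cpoly := mmap (@mpolyC _ _) swapvar f.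

Definition conjP (f : Cpoly) : Cpoly := map_mpoly conjc (comp_conj f).

Definition Lap (f : Cpoly) : Cpoly :=
  \sum_(j < n.+1) mderiv (zi j) (mderiv (zbi j) f).

(* exp(-h Lap) f ; Lap lowers the degree, so iterates of order > msize f vanish *)
Definition expLap (h : R) (f : Cpoly) : Cpoly :=
  \sum_(k < (msize f).+1) (((- h) ^+ k / (k`!)%:R)%:C) *: iter k Lap f.

Definition Theta (h : R) (f : Cpoly) : Cpoly := comp_conj (expLap h f).

End Wick.

(* For every variable v among z_0, ..., z_n, z̄_0, ..., z̄_n the commutator
   [Δ, v] = ∂_v̄ commutes with Δ, so e^{-ħΔ} v = (v - ħ ∂_v̄) e^{-ħΔ}; composing
   with the conjugation v ↦ v̄ gives Θ(v f) = v̄ Θf - ħ ∂_v Θf and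
   Θ(∂_v f) = ∂_v̄ Θf.  Bijectivity follows from e^{ħΔ} e^{-ħΔ} = 1.  The Wick
   product ⋆_ħ is determined, by induction on its left factor, by linearity,
   1 ⋆ g = g, z_j f ⋆ g = z_j (f ⋆ g), z̄_j f ⋆ g = z̄_j (f ⋆ g) + ħ f ⋆ ∂_{z_j} g
   and the Leibniz rule ∂(f ⋆ g) = ∂f ⋆ g + f ⋆ ∂g.  Through Θ these relations
   for ⋆_ħ become those for ⋆_{-ħ}, so Θ(f ⋆_ħ g) = Θf ⋆_{-ħ} Θg by induction
   on f; the same induction gives Θ(f̄) = conj(Θf). *)

From HB Require Import structures.
From mathcomp Require Import all_boot all_order all_algebra.
From mathcomp Require Import mpoly ssrcomplements.
From mathcomp Require Import complex.
From mathcomp Require Import zify ring.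
Import Order.TTheory GRing.Theory Num.Theory.
Local Open Scope ring_scope.

Set Implicit Arguments.
Unset Strict Implicit.
Unset Printing Implicit Defensive.

Section MultinomInd.
Variable k : nat.

Lemma multinom_ind (Q : 'X_{1..k} -> Prop) :
  Q 0%MM -> (forall m i, Q m -> Q (m + U_(i))%MM) -> forall m, Q m.
Proof.
move=> Q0 QU m; rewrite [m]multinomUE_id.
elim: (index_enum _) => [|i s IH]; first by rewrite big_nil.
rewrite big_cons; elim: (m i) => [|e IHe]; first by rewrite mulm0n add0m.
by rewrite mulmSr -addmA [(U_(i) + _)%MM]addmC addmA; apply: QU.
Qed.

End MultinomInd.

Section BoundedSums.
Variables (k : nat) (V : nmodType).
Implicit Type F : 'X_{1..k} -> V.

Lemma sum_bmnm_widen b b' F : (b <= b')%N ->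
    (forall m, (b <= mdeg m)%N -> F m = 0) ->
  \sum_(m : 'X_{1..k < b'}) F m = \sum_(m : 'X_{1..k < b}) F m.
Proof.
move=> le_bb' F0; symmetry.
apply: (@eq_big_widen _ _ _ _ _ _ 'X_{1..k < b} 'X_{1..k < b'} xpredT F).
  by move=> m /leq_trans; apply.
by move=> m; rewrite -leqNgt => /F0.
Qed.

Lemma sum_bmnm_shift b (i : 'I_k) F :
    (forall m : 'X_{1..k}, m i = 0%N -> F m = 0) ->
  \sum_(m : 'X_{1..k < b.+1}) F m = \sum_(m : 'X_{1..k < b}) F (m + U_(i))%MM.
Proof.
move=> F0; set r := [seq (val m + U_(i))%MM | m <- index_enum 'X_{1..k < b}].
have memr (m : 'X_{1..k < b.+1}) : (val m \in r) = (0 < m i)%N.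
  apply/mapP/idP => [[m' _ ->]|m_i]; first by rewrite mnmDE mnm1E eqxx addn1.
  have le_Um : (U_(i) <= val m)%MM.
    by apply/mnm_lepP => l; rewrite mnm1E; case: eqP => // <-.
  have lt_m'b : (mdeg (val m - U_(i)) < b)%N.
    have : (mdeg (val m) < b.+1)%N := bmdeg m.
    by rewrite -{1}(submK le_Um) mdegD mdeg1 addn1 ltnS.
  by exists (BMultinom lt_m'b); rewrite ?mem_index_enum //= submK.
rewrite -[RHS](big_map (fun m : 'X_{1..k < b} => (val m + U_(i))%MM) xpredT F).
rewrite (big_mksub 'X_{1..k < b.+1}) //=; first last.
- by move=> m /mapP [m' _ ->]; rewrite mdegD mdeg1 addn1 ltnS bmdeg.
- rewrite map_inj_uniq ?index_enum_uniq // => m1 m2 /addIm; exact: val_inj.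
rewrite (bigID (fun m : 'X_{1..k < b.+1} => val m \in r)) /= [X in _ + X]big1 ?addr0 //.
by move=> m; rewrite memr -eqn0Ngt => /eqP /F0.
Qed.

Lemma sum_ord_widen b b' (F : nat -> V) : (b <= b')%N ->
    (forall e, (b <= e)%N -> F e = 0) ->
  \sum_(e < b') F e = \sum_(e < b) F e.
Proof.
move=> le_bb' F0; rewrite -(subnKC le_bb') big_split_ord /= [X in _ + X]big1 ?addr0 // => e _.
by apply: F0; rewrite leq_addr.
Qed.

End BoundedSums.

Section MPolyDerivations.
Variables (k : nat) (R : nzRingType).
Implicit Types (p : {mpoly R[k]}) (m : 'X_{1..k}).

Lemma mpoly_ind_mulX (Q : {mpoly R[k]} -> Prop) :
    Q 0 -> Q 1 -> (forall p q, Q p -> Q q -> Q (p + q)) ->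
    (forall c p, Q p -> Q (c *: p)) -> (forall i p, Q p -> Q ('X_i * p)) ->
  forall p, Q p.
Proof.
move=> Q0 Q1 QD QZ QX; elim/mpolyind => // c m p _ _ Qp; apply: QD => //.
apply: QZ; rewrite mpolyXE_id.
elim: (index_enum _) => [|i s IH]; first by rewrite big_nil.
by rewrite big_cons; elim: (m i) => [|e IHe]; rewrite ?expr0 ?mul1r // exprS -mulrA; apply: QX.
Qed.

Lemma mderivX1 i l : ('X_l : {mpoly R[k]})^`M(i) = (l == i)%:R.
Proof.
rewrite mderivX mnm1E; case: eqP => [->|_]; last by rewrite scale0r.
by rewrite -[X in (X - _)%MM]add0m addmK mpolyX0 scale1r.
Qed.

Lemma mderiv1 i : (1 : {mpoly R[k]})^`M(i) = 0.
Proof. by rewrite -mpolyC1 mderivC. Qed.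

Lemma mderiv_mulX i l p : ('X_l * p)^`M(i) = 'X_l * p^`M(i) + (l == i)%:R *: p.
Proof. by rewrite mderivM mderivX1 mulr_natl scaler_nat addrC. Qed.

Lemma mderivmDU1 m i p : p^`M[m + U_(i)] = p^`M[m]^`M(i).
Proof. by rewrite mderivmDm mderivmU1m. Qed.

Lemma mderivm_mderiv m i p : p^`M(i)^`M[m] = p^`M[m]^`M(i).
Proof. by rewrite -mderivmU1m -mderivmDm addmC mderivmDU1. Qed.

Lemma mderivm_mulX m l p :
  ('X_l * p)^`M[m] = 'X_l * p^`M[m] + (m l)%:R *: p^`M[m - U_(l)].
Proof.
elim/multinom_ind: m => [|m i IH]; first by rewrite !mderivm0m mnm0E scale0r addr0.
rewrite !mderivmDU1 IH mderivD mderiv_mulX mderivZ -addrA; congr (_ + _).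
rewrite mnmDE mnm1E; have [<-|ne_li] := eqVneq l i.
  rewrite addmK addn1; have [->|ml_gt0] := eqVneq (m l) 0%N.
    by rewrite scale0r addr0.
  rewrite -mderivmDU1 submK ?lep1mP // !scaler_nat.
  by rewrite mulr1n mulrS.
rewrite scale0r add0r addn0 -mderivmDU1; congr (_ *: mderivm _ _).
apply/mnmP => j; rewrite !(mnmDE, mnmBE, mnm1E).
case: (eqVneq l j) => [<-|_]; last by rewrite !subn0.
by rewrite [i == l]eq_sym (negbTE ne_li) !addn0.
Qed.

Lemma mderivm_eq0 m p : (msize p <= mdeg m)%N -> p^`M[m] = 0.
Proof.
move=> le_pm; apply/mpolyP => m'.
rewrite mcoeff_mderivm mcoeff0 memN_msupp_eq0 ?mul0rn //.
by apply: msize_mdeg_ge; rewrite mdegD (leq_trans le_pm) ?leq_addr.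
Qed.

Lemma msize_mderiv i p : (msize p^`M(i) <= (msize p).-1)%N.
Proof.
rewrite msizeE; apply/bigmax_leqP_seq => m; rewrite mcoeff_msupp mcoeff_deriv => nz_m _.
have : (m + U_(i))%MM \in msupp p.
  by rewrite mcoeff_msupp; apply: contraNneq nz_m => ->; rewrite mul0rn.
move/msize_mdeg_lt; rewrite mdegD mdeg1; lia.
Qed.

Lemma map_mpoly_mderiv (S : nzRingType) (f : {additive R -> S}) i p :
  map_mpoly f p^`M(i) = (map_mpoly f p)^`M(i).
Proof.
by apply/mpolyP => m; rewrite mcoeff_map_mpoly !mcoeff_deriv mcoeff_map_mpoly raddfMn.
Qed.

End MPolyDerivations.

Section MultinomRelabel.
Variables (a b : nat) (s : 'I_a -> 'I_b).
Implicit Type K : 'X_{1..a}.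

Definition mnm_map K : 'X_{1..b} := (\sum_(j < a) U_(s j) *+ K j)%MM.

Lemma mnm_mapE K i : mnm_map K i = (\sum_(j < a | s j == i) K j)%N.
Proof.
rewrite mnm_sumE [RHS]big_mkcond; apply: eq_bigr => j _.
by rewrite mulmnE mnm1E; case: eqP; rewrite ?mul1n.
Qed.

Lemma mdeg_mnm_map K : mdeg (mnm_map K) = mdeg K.
Proof. by rewrite mdeg_sum mdegE; apply: eq_bigr => j _; rewrite mdegMn mdeg1 mul1n. Qed.

Lemma mnm_mapD K1 K2 : mnm_map (K1 + K2) = (mnm_map K1 + mnm_map K2)%MM.
Proof.
by apply/mnmP => i; rewrite mnmDE !mnm_mapE -big_split; apply: eq_bigr => j _; rewrite mnmDE.
Qed.

Lemma mnm_mapU j : mnm_map U_(j) = U_(s j)%MM.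
Proof.
rewrite /mnm_map (bigD1 j) //= mnm1E eqxx mulm1n big1 ?addm0 // => l ne_lj.
by rewrite mnm1E eq_sym (negbTE ne_lj) mulm0n.
Qed.

Lemma mnm_map0 : mnm_map 0%MM = 0%MM.
Proof. by rewrite /mnm_map big1 // => j _; rewrite mnm0E mulm0n. Qed.

Lemma mnm_map_out K i : (forall j, s j != i) -> mnm_map K i = 0%N.
Proof. by move=> s_i; rewrite mnm_mapE big_pred0 // => j; apply/negbTE. Qed.

Lemma mderivm_mnm_mapE (R : nzRingType) K (p : {mpoly R[b]}) :
  p^`M[mnm_map K] = foldr (fun j => iter (K j) (mderiv (s j))) p (enum 'I_a).
Proof.
rewrite mderiv_summ filter_predT foldr_map [index_enum _]unlock enumT.
by elim: (Finite.enum _) => //= j r ->; rewrite mderivn_iter.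
Qed.

Hypothesis s_inj : injective s.

Lemma mnm_map_img K j : mnm_map K (s j) = K j.
Proof. by rewrite mnm_mapE (big_pred1 j) // => l; rewrite (inj_eq s_inj). Qed.

End MultinomRelabel.

Section Wick.
Variables (R : rcfType) (n : nat).
Local Notation N := (n.+1 + n.+1)%N.
Local Notation P := (Cpoly R n).
Local Open Scope complex_scope.
Implicit Types (f g p q : P) (K : 'X_{1..n.+1}).
Local Notation L := (@Lap R n).

Variant var_spec : 'I_N -> Type :=
  | ZVar (j : 'I_n.+1) : var_spec (zi j)
  | ZbarVar (j : 'I_n.+1) : var_spec (zbi j).

Lemma varP i : var_spec i.
Proof.
case: (splitP i) => j ij.
- by rewrite (_ : i = zi j); [constructor | apply: val_inj].
- by rewrite (_ : i = zbi j); [constructor | apply: val_inj].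
Qed.

Lemma zi_inj : injective (@zi n).
Proof. exact: lshift_inj. Qed.

Lemma zbi_inj : injective (@zbi n).
Proof. exact: rshift_inj. Qed.

Lemma zi_eqF (j l : 'I_n.+1) : (zi j == zbi l) = false.
Proof.
apply/negbTE/eqP => /(congr1 val) /= ji.
by have := ltn_ord j; rewrite ji ltnNge leq_addr.
Qed.

Lemma zbi_eqF (j l : 'I_n.+1) : (zbi j == zi l) = false.
Proof. by rewrite eq_sym zi_eqF. Qed.

Definition conjv (i : 'I_N) : 'I_N :=
  match split i with inl j => zbi j | inr j => zi j end.

Lemma conjv_zi (j : 'I_n.+1) : conjv (zi j) = zbi j.
Proof. by rewrite /conjv /zi (unsplitK (inl j : 'I_n.+1 + 'I_n.+1)). Qed.

Lemma conjv_zbi (j : 'I_n.+1) : conjv (zbi j) = zi j.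
Proof. by rewrite /conjv /zbi (unsplitK (inr j : 'I_n.+1 + 'I_n.+1)). Qed.

Lemma conjvK : involutive conjv.
Proof. by move=> i; case: (varP i) => j; rewrite ?(conjv_zi, conjv_zbi). Qed.

Lemma comp_conj_is_linear : linear (@comp_conj R n).
Proof. by move=> c p q; rewrite /comp_conj mmapD mmapZ mul_mpolyC. Qed.

HB.instance Definition _ :=
  GRing.isLinear.Build R[i] P P *:%R (@comp_conj R n) comp_conj_is_linear.

Lemma comp_conj_is_multiplicative : multiplicative (@comp_conj R n).
Proof. by split => [p q|]; rewrite /comp_conj ?rmorphM ?rmorph1. Qed.

HB.instance Definition _ :=
  GRing.isMultiplicative.Build P P (@comp_conj R n) comp_conj_is_multiplicative.

Lemma comp_conjX i : comp_conj 'X_i = 'X_(conjv i) :> P.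
Proof. by rewrite /comp_conj mmapX mmap1U /swapvar /conjv; case: (split i). Qed.

Lemma comp_conj_mderiv i p : comp_conj p^`M(i) = (comp_conj p)^`M(conjv i).
Proof.
elim/mpoly_ind_mulX: p i => [i|i|p q IHp IHq i|c p IHp i|l p IHp i].
- by rewrite mderiv0 raddf0 mderiv0.
- by rewrite mderiv1 rmorph1 mderiv1 raddf0.
- by rewrite !raddfD /= IHp IHq.
- by rewrite !linearZ /= IHp.
rewrite mderiv_mulX !rmorphM /= linearD linearZ /= rmorphM /= comp_conjX IHp.
by rewrite mderiv_mulX (inj_eq (can_inj conjvK)).
Qed.

Lemma comp_conjK : involutive (@comp_conj R n).
Proof.
elim/mpoly_ind_mulX => [|||c p IHp|l p IHp]; rewrite ?raddf0 ?rmorph1 //.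
- by move=> p q IHp IHq; rewrite !raddfD /=; congr (_ + _).
- by rewrite !linearZ /= IHp.
by rewrite !rmorphM /= !comp_conjX conjvK IHp.
Qed.

Lemma conjP_is_additive : additive (@conjP R n).
Proof. by move=> p q; rewrite /conjP !raddfB. Qed.

HB.instance Definition _ :=
  GRing.isAdditive.Build P P (@conjP R n) conjP_is_additive.

Lemma conjPZ c p : conjP (c *: p) = c^* *: conjP p.
Proof. by rewrite /conjP linearZ map_mpolyZ. Qed.

Lemma conjPZ_real (r : R) p : conjP (r%:C *: p) = r%:C *: conjP p.
Proof. by rewrite conjPZ; congr (_ *: _); apply: conjc_real. Qed.

Lemma conjP1 : conjP 1 = 1 :> P.
Proof. by rewrite /conjP !rmorph1. Qed.

Lemma conjP_mulX l p : conjP ('X_l * p) = 'X_(conjv l) * conjP p.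
Proof. by rewrite /conjP !rmorphM /= comp_conjX map_mpolyX. Qed.

Lemma conjP_mderiv i p : conjP p^`M(i) = (conjP p)^`M(conjv i).
Proof. by rewrite /conjP comp_conj_mderiv map_mpoly_mderiv. Qed.

Lemma dZE K f : dZ K f = f^`M[mnm_map (@zi n) K].
Proof. by rewrite mderivm_mnm_mapE. Qed.

Lemma dZbE K f : dZb K f = f^`M[mnm_map (@zbi n) K].
Proof. by rewrite mderivm_mnm_mapE. Qed.

Definition wick_coef (h : R) K : R := h ^+ mdeg K / (mfact K)%:R.

Definition wick_term h f g K : P := (wick_coef h K)%:C *: (dZb K f * dZ K g).

Lemma mfactD1 K j : mfact (K + U_(j))%MM = (mfact K * (K j).+1)%N.
Proof.
rewrite /mfact (bigD1 j) //= [in RHS](bigD1 j) //= mnmDE mnm1E eqxx addn1 factS.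
rewrite (eq_bigr (fun l => (K l)`!)); first by ring.
by move=> l ne_lj; rewrite mnmDE mnm1E eq_sym (negbTE ne_lj) addn0.
Qed.

Lemma wick_coefD1 h K j :
  wick_coef h (K + U_(j))%MM * (K j).+1%:R = h * wick_coef h K.
Proof.
rewrite /wick_coef mdegD mdeg1 addn1 exprS mfactD1 natrM.
have nz_fact : (mfact K)%:R != 0 :> R.
  by rewrite pnatr_eq0 -lt0n prodn_gt0 // => l; rewrite fact_gt0.
by field; rewrite nz_fact nat1r pnatr_eq0.
Qed.

Lemma wickE h f g b : (msize f <= b)%N ->
  wick h f g = \sum_(K : 'X_{1..n.+1 < b}) wick_term h f g K.
Proof.
have term0 K : (msize f <= mdeg K)%N -> wick_term h f g K = 0.
  by move=> le_fK; rewrite /wick_term dZbE mderivm_eq0 ?mdeg_mnm_map // mul0r scaler0.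
have -> : wick h f g = \sum_(K : 'X_{1..n.+1 < (msize f).+1}) wick_term h f g K by [].
move=> le_fb; rewrite (@sum_bmnm_widen _ _ (msize f) (msize f).+1) //.
by rewrite (@sum_bmnm_widen _ _ (msize f) b).
Qed.

Lemma wickDl h p q g : wick h (p + q) g = wick h p g + wick h q g.
Proof.
rewrite !(@wickE _ _ _ (msize p + msize q + msize (p + q))) -?big_split; try lia.
by apply: eq_bigr => K _; rewrite /wick_term !dZbE mderivmD mulrDl scalerDr.
Qed.

Lemma wickZl h c p g : wick h (c *: p) g = c *: wick h p g.
Proof.
rewrite !(@wickE _ _ _ (msize p + msize (c *: p))) ?scaler_sumr; try lia.
by apply: eq_bigr => K _; rewrite /wick_term !dZbE mderivmZ -scalerAl !scalerA mulrC.
Qed.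

Lemma wick0l h g : wick h 0 g = 0.
Proof. by rewrite -[X in wick h X g](scale0r (0 : P)) wickZl scale0r. Qed.

Lemma wickBl h p q g : wick h (p - q) g = wick h p g - wick h q g.
Proof. by rewrite wickDl -scaleN1r wickZl scaleN1r. Qed.

Lemma wick1l h g : wick h 1 g = g.
Proof.
rewrite (@wickE _ _ _ 1) ?msize1 // (big_pred1 (@bm0 n.+1 0)) => [|K]; last first.
  apply/esym/eqP/val_inj/eqP; rewrite -mdeg_eq0 -leqn0 -ltnS; exact: bmdeg.
rewrite /wick_term dZbE dZE !mnm_map0 !mderivm0m mul1r /wick_coef mdeg0 expr0.
by rewrite /mfact big1 ?divr1 ?scale1r // => l _; rewrite mnm0E.
Qed.

Lemma wick_mulXz h j f g : wick h ('X_(zi j) * f) g = 'X_(zi j) * wick h f g.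
Proof.
rewrite !(@wickE _ _ _ (msize ('X_(zi j) * f) + msize f)) ?mulr_sumr; try lia.
apply: eq_bigr => K _; rewrite /wick_term !dZbE mderivm_mulX mnm_map_out ?scale0r ?addr0.
  by rewrite -mulrA scalerAr.
by move=> l; rewrite zbi_eqF.
Qed.

Lemma wick_mulXzb h j f g : wick h ('X_(zbi j) * f) g =
  'X_(zbi j) * wick h f g + h%:C *: wick h f g^`M(zi j).
Proof.
set B := (msize ('X_(zbi j) * f) + msize f)%N.
pose F K := (wick_coef h K)%:C *:
  ((K j)%:R *: f^`M[mnm_map (@zbi n) K - U_(zbi j)] * dZ K g).
have termE K : wick_term h ('X_(zbi j) * f) g K = 'X_(zbi j) * wick_term h f g K + F K.
  rewrite /wick_term /F !dZbE mderivm_mulX mnm_map_img //; last exact: zbi_inj.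
  by rewrite mulrDl scalerDr -mulrA scalerAr.
rewrite (@wickE _ _ g^`M(zi j) B) ?leq_addl // !(@wickE _ _ _ B.+1); try lia.
rewrite (eq_bigr _ (fun (K : 'X_{1..n.+1 < B.+1}) _ => termE K)) big_split /=.
rewrite -mulr_sumr; congr (_ + _).
(* After the shift K ↦ K + e_j, the Leibniz term K_j ∂^(K - e_j) of the K-th
   summand becomes ħ times the K-th summand of f ⋆ ∂_{z_j} g. *)
rewrite (@sum_bmnm_shift _ _ B j F) => [|K Kj0]; last by rewrite /F Kj0 scale0r mul0r scaler0.
rewrite scaler_sumr; apply: eq_bigr => K _.
rewrite /F /wick_term mnmDE mnm1E eqxx addn1 !dZE !dZbE !mnm_mapD !mnm_mapU addmK.
rewrite mderivmDU1 mderivm_mderiv.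
by rewrite -scalerAl !scalerA -(rmorph_nat (real_complex R)) -!rmorphM wick_coefD1.
Qed.

Lemma mderiv_wick h i f g :
  (wick h f g)^`M(i) = wick h f^`M(i) g + wick h f g^`M(i).
Proof.
have le_f'f : (msize f^`M(i) <= msize f)%N := leq_trans (msize_mderiv i f) (leq_pred _).
rewrite !(@wickE _ _ _ (msize f)) // raddf_sum -big_split; apply: eq_bigr => K _.
by rewrite /wick_term /= mderivZ mderivM !dZbE !dZE !mderivm_mderiv scalerDr.
Qed.

Lemma Lap_is_linear : linear (@Lap R n).
Proof.
move=> c p q; rewrite /Lap scaler_sumr -big_split; apply: eq_bigr => j _.
by rewrite !linearP.
Qed.

HB.instance Definition _ := GRing.isLinear.Build R[i] P P *:%R (@Lap R n) Lap_is_linear.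

Lemma Lap_mderiv i p : L p^`M(i) = (L p)^`M(i).
Proof.
rewrite /Lap raddf_sum; apply: eq_bigr => j _ /=.
by rewrite [p^`M(i)^`M(zbi j)]mderiv_comm [_^`M(i)^`M(zi j)]mderiv_comm.
Qed.

Lemma Lap_mulX l p : L ('X_l * p) = 'X_l * L p + p^`M(conjv l).
Proof.
have termE j : ('X_l * p)^`M(zbi j)^`M(zi j) = 'X_l * p^`M(zbi j)^`M(zi j) +
    ((l == zi j)%:R *: p^`M(zbi j) + (l == zbi j)%:R *: p^`M(zi j)).
  by rewrite !(mderiv_mulX, mderivD, mderivZ) addrA.
rewrite /Lap (eq_bigr _ (fun j _ => termE j)) big_split /= -mulr_sumr; congr (_ + _).
case: (varP l) => k; rewrite ?(conjv_zi, conjv_zbi) (bigD1 k) //= big1 => [|j ne_jk];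
  rewrite ?(inj_eq zi_inj, inj_eq zbi_inj, zi_eqF, zbi_eqF, eqxx) //=;
  rewrite ?(scale0r, scale1r, add0r, addr0) //;
  by rewrite eq_sym (negbTE ne_jk) scale0r.
Qed.

Lemma msize_Lap p : (msize (L p) <= (msize p).-1)%N.
Proof.
apply: leq_trans (msize_sum _ _ _) _; apply/bigmax_leqP => j _.
apply: leq_trans (msize_mderiv _ _) (leq_trans (leq_pred _) _); exact: msize_mderiv.
Qed.

Lemma iter_LapP e c p q :
  iter e L (c *: p + q) = c *: iter e L p + iter e L q.
Proof. by elim: e => //= e ->; rewrite linearP. Qed.

Lemma iter_Lap_mderiv e i p : iter e L p^`M(i) = (iter e L p)^`M(i).
Proof. by elim: e => //= e ->; rewrite Lap_mderiv. Qed.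

Lemma iter_Lap_eq0 e p : (msize p <= e)%N -> iter e L p = 0.
Proof.
have msize_iter d : (msize (iter d L p) <= msize p - d)%N.
  elim: d => [|d IH] /=; first by rewrite subn0.
  by rewrite subnS; apply: leq_trans (msize_Lap _) _; rewrite -!subn1 leq_sub2r.
move=> le_pe; apply/eqP; rewrite -msize_poly_eq0 -leqn0.
by apply: leq_trans (msize_iter e) _; rewrite leqn0 subn_eq0.
Qed.

Lemma iter_Lap_mulX e l p : iter e.+1 L ('X_l * p) =
  'X_l * iter e.+1 L p + e.+1%:R *: (iter e L p)^`M(conjv l).
Proof.
elim: e => [|e IH]; first by rewrite /= Lap_mulX scale1r.
rewrite [LHS]iterS IH linearD linearZ /= Lap_mulX -Lap_mderiv -addrA; congr (_ + _).
by rewrite !scaler_nat -mulrS.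
Qed.

Definition exp_coef (h : R) e : R := (- h) ^+ e / (e`!)%:R.

Lemma exp_coef0 h : exp_coef h 0 = 1.
Proof. by rewrite /exp_coef expr0 divr1. Qed.

Lemma exp_coefS h e : exp_coef h e.+1 * e.+1%:R = - h * exp_coef h e.
Proof.
rewrite /exp_coef exprS factS natrM.
have nz_fact : (e`!)%:R != 0 :> R by rewrite pnatr_eq0 -lt0n fact_gt0.
by field; rewrite nz_fact nat1r pnatr_eq0.
Qed.

Lemma expLapE h b p : (msize p <= b)%N ->
  expLap h p = \sum_(e < b) (exp_coef h e)%:C *: iter e L p.
Proof.
pose F e := (exp_coef h e)%:C *: iter e L p.
have F0 e : (msize p <= e)%N -> F e = 0 by rewrite /F => /iter_Lap_eq0 ->; rewrite scaler0.
move=> le_pb; rewrite /expLap (@sum_ord_widen _ (msize p) (msize p).+1 F) //.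
by rewrite (@sum_ord_widen _ (msize p) b F).
Qed.

Lemma expLap_is_linear h : linear (@expLap R n h).
Proof.
move=> c p q; set b := (msize p + msize q + msize (c *: p + q))%N.
rewrite !(@expLapE h b) ?scaler_sumr -?big_split; try lia.
by apply: eq_bigr => e _; rewrite iter_LapP scalerDr !scalerA mulrC.
Qed.

HB.instance Definition _ h :=
  GRing.isLinear.Build R[i] P P *:%R (@expLap R n h) (expLap_is_linear h).

Lemma expLap1 h : expLap h 1 = 1 :> P.
Proof.
by rewrite (@expLapE h 1) ?msize1 // big_ord1 exp_coef0 rmorph1 scale1r.
Qed.

Lemma expLap_mderiv h i p : expLap h p^`M(i) = (expLap h p)^`M(i).
Proof.
have le_p'p : (msize p^`M(i) <= msize p)%N := leq_trans (msize_mderiv i p) (leq_pred _).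
rewrite !(@expLapE h (msize p)) // raddf_sum; apply: eq_bigr => e _ /=.
by rewrite iter_Lap_mderiv linearZ.
Qed.

Lemma expLap_mulX h l p :
  expLap h ('X_l * p) = 'X_l * expLap h p - h%:C *: (expLap h p)^`M(conjv l).
Proof.
set b := (msize ('X_l * p) + msize p)%N.
have termE e : (exp_coef h e.+1)%:C *: iter e.+1 L ('X_l * p) =
    'X_l * ((exp_coef h e.+1)%:C *: iter e.+1 L p)
    - h%:C *: ((exp_coef h e)%:C *: iter e L p)^`M(conjv l).
  rewrite iter_Lap_mulX scalerDr scalerAr scalerA -(rmorph_nat (real_complex R)) -rmorphM exp_coefS.
  by rewrite mderivZ scalerA -rmorphM -scaleNr -rmorphN -mulNr.
rewrite (@expLapE h b.+1 ('X_l * p)); last lia.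
rewrite [X in 'X_l * X - _](@expLapE h b.+1 p); last lia.
rewrite (@expLapE h b p); last lia.
rewrite big_ord_recl (eq_bigr _ (fun (e : 'I_b) _ => termE e)) sumrB -mulr_sumr.
rewrite -scaler_sumr -raddf_sum [in RHS]big_ord_recl !exp_coef0 rmorph1 !scale1r.
by rewrite mulrDr addrA.
Qed.

Lemma expLapK h : cancel (@expLap R n h) (@expLap R n (- h)).
Proof.
elim/mpoly_ind_mulX => [|||c p IHp|l p IHp]; rewrite ?raddf0 ?expLap1 //.
- by move=> p q IHp IHq; rewrite !raddfD /=; congr (_ + _).
- by rewrite !linearZ /= IHp.
rewrite expLap_mulX linearB linearZ /= expLap_mulX expLap_mderiv IHp rmorphN scaleNr opprK.
exact: addrK.
Qed.

Lemma Theta_is_linear h : linear (@Theta R n h).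
Proof. by move=> c p q; rewrite /Theta !linearP. Qed.

HB.instance Definition _ h :=
  GRing.isLinear.Build R[i] P P *:%R (@Theta R n h) (Theta_is_linear h).

Lemma Theta1 h : Theta h 1 = 1 :> P.
Proof. by rewrite /Theta expLap1 rmorph1. Qed.

Lemma Theta_mderiv h i p : Theta h p^`M(i) = (Theta h p)^`M(conjv i).
Proof. by rewrite /Theta expLap_mderiv comp_conj_mderiv. Qed.

Lemma Theta_mulX h l p :
  Theta h ('X_l * p) = 'X_(conjv l) * Theta h p - h%:C *: (Theta h p)^`M(l).
Proof.
by rewrite /Theta expLap_mulX linearB linearZ rmorphM /= comp_conjX comp_conj_mderiv conjvK.
Qed.

Lemma Theta_bij h : bijective (@Theta R n h).
Proof.
exists (fun q => expLap (- h) (comp_conj q)) => p; rewrite /Theta.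
  by rewrite comp_conjK expLapK.
by rewrite -{1}(opprK h) expLapK comp_conjK.
Qed.

Lemma Theta_conjP h f : Theta h (conjP f) = conjP (Theta h f).
Proof.
elim/mpoly_ind_mulX: f => [|||c p IHp|l p IHp].
- by rewrite !raddf0.
- by rewrite conjP1 Theta1 conjP1.
- by move=> p q IHp IHq; rewrite !raddfD /=; exact: (congr2 +%R IHp IHq).
- by rewrite conjPZ !linearZ /= IHp conjPZ.
rewrite conjP_mulX !Theta_mulX conjvK raddfB /= conjP_mulX conjPZ_real conjP_mderiv.
by rewrite conjvK IHp.
Qed.

Lemma Theta_wick h f g :
  Theta h (wick h f g) = wick (- h) (Theta h f) (Theta h g).
Proof.
elim/mpoly_ind_mulX: f g => [g|g|p q IHp IHq g|c p IHp g|l p IHp g].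
- by rewrite !(wick0l, raddf0).
- by rewrite wick1l Theta1 wick1l.
- by rewrite wickDl !raddfD /= wickDl; exact: (congr2 +%R (IHp g) (IHq g)).
- by rewrite wickZl !linearZ /= IHp wickZl.
rewrite Theta_mulX wickBl wickZl; case: (varP l) => j.
- rewrite wick_mulXz Theta_mulX IHp mderiv_wick conjv_zi wick_mulXzb rmorphN /=.
  by rewrite scalerDr scaleNr opprD addrA [in RHS]addrAC.
rewrite wick_mulXzb linearD linearZ /= Theta_mulX !IHp Theta_mderiv conjv_zbi conjv_zi.
by rewrite wick_mulXz mderiv_wick scalerDr opprD addrA addrNK.
Qed.

End Wick.

Unset Implicit Arguments.

Theorem lemma6p3 (R : rcfType) (n : nat) (h : R) (hpos : 0 < h) :
  (forall (a : R[i]) (f g : Cpoly R n),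
      Theta h (a *: f + g) = a *: Theta h f + Theta h g)
  /\ bijective (@Theta R n h)
  /\ (forall f g : Cpoly R n,
        Theta h (wick h f g) = wick (- h) (Theta h f) (Theta h g))
  /\ (forall f : Cpoly R n, Theta h (conjP f) = conjP (Theta h f)).
Proof.
split; first by move=> a f g; exact: linearP.
split; first exact: Theta_bij.
by split; [exact: Theta_wick | exact: Theta_conjP].
Qed.
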